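(* As subgroups of $SU(3)$, $$D(9,1,1;2,1,1)\subsetneq D(9,1,1;2,0,1)=D(9,1,1;2,0,0)=D(18,1,1;2,1,1)=D(18,1,1;2,0,0)=D(18,1,1;2,0,1).$$ In particular all five groups on the right are isomorphic to $Fr(162\times 4)$.
   Context: For a positive integer $n$ and integers $a,b$, let $\eta=e^{2i\pi/n}$ and $F(n,a,b)=\mathrm{diag}(\eta^a,\eta^b,\eta^{-a-b})$. For a positive integer $d$ and integers $r,s$, let $\delta=e^{2i\pi/d}$ and $\tilde G(d,r,s)=\begin{pmatrix}\delta^r&0&0\\0&0&\delta^s\\0&-\delta^{-r-s}&0\end{pmatrix}$. Let $E=\begin{pmatrix}0&1&0\\0&0&1\\1&0&0\end{pmatrix}$ and $D(n,a,b;d,r,s)=\langle F(n,a,b),E,\tilde G(d,r,s)\rangle\subset SU(3)$. Let $\omega=e^{2i\pi/3}$, $J$ the antidiagonal matrix with antidiagonal entries $1$, $G_1=\mathrm{diag}(e^{7i\pi/9},-e^{4i\pi/9},-e^{7i\pi/9})$, $G_2=\begin{pmatrix}-\tfrac12 e^{4i\pi/9}&\tfrac{1}{\sqrt2}e^{7i\pi/9}&\tfrac12 e^{4i\pi/9}\\ \tfrac{1}{\sqrt2}e^{7i\pi/9}&0&\tfrac{1}{\sqrt2}e^{7i\pi/9}\\ \tfrac12 e^{4i\pi/9}&\tfrac{1}{\sqrt2}e^{7i\pi/9}&-\tfrac12 e^{4i\pi/9}\end{pmatrix}$, $FUM=-\omega J$, $Fr(162\times 4)=\langle G_1,G_2,FUM\rangle$.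 *)

From HB Require Import structures.
From mathcomp Require Import all_boot all_order all_algebra all_field.
Set Implicit Arguments. Unset Strict Implicit. Unset Printing Implicit Defensive.
Import Order.TTheory GRing.Theory Num.Theory.
Local Open Scope ring_scope.

(* e^{i pi / n} : the n-th root of -1 with minimal nonnegative argument *)
Definition epi (n : nat) : algC := n.-root (-1).
Definition eta (n : nat) : algC := epi n ^+ 2.

Definition mx3 (a b c d e f g h k : algC) : 'M[algC]_3 :=
  \matrix_(i < 3, j < 3)
    match nat_of_ord i, nat_of_ord j with
    | 0, 0 => a | 0, 1 => b | 0, _ => c
    | 1, 0 => d | 1, 1 => e | 1, _ => f
    | _, 0 => g | _, 1 => h | _, _ => k
    end.

Definition Fmx (n : nat) (a b : int) : 'M[algC]_3 :=
  mx3 (eta n ^ a) 0 0  0 (eta n ^ b) 0  0 0 (eta n ^ (- a - b)).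

Definition Gtmx (d : nat) (r s : int) : 'M[algC]_3 :=
  mx3 (eta d ^ r) 0 0  0 0 (eta d ^ s)  0 (- eta d ^ (- r - s)) 0.

Definition Emx : 'M[algC]_3 := mx3 0 1 0  0 0 1  1 0 0.

Inductive gen (S : seq 'M[algC]_3) : 'M[algC]_3 -> Prop :=
  | gen_in x : x \in S -> gen S x
  | gen_one : gen S 1%:M
  | gen_mul x y : gen S x -> gen S y -> gen S (x *m y)
  | gen_inv x : gen S x -> gen S (invmx x).

Definition Dgrp (n : nat) (a b : int) (d : nat) (r s : int) : 'M[algC]_3 -> Prop :=
  gen [:: Fmx n a b; Emx; Gtmx d r s].

Definition omega : algC := eta 3.
Definition Jmx : 'M[algC]_3 := mx3 0 0 1  0 1 0  1 0 0.
Definition G1mx : 'M[algC]_3 :=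
  mx3 (epi 9 ^+ 7) 0 0  0 (- epi 9 ^+ 4) 0  0 0 (- epi 9 ^+ 7).
Definition G2mx : 'M[algC]_3 :=
  let p := epi 9 ^+ 4 in let q := epi 9 ^+ 7 in let t := (sqrtC 2)^-1 in
  mx3 (- p / 2) (t * q) (p / 2)
      (t * q) 0 (t * q)
      (p / 2) (t * q) (- p / 2).
Definition FUMmx : 'M[algC]_3 := - omega *: Jmx.
Definition Fr162x4 : 'M[algC]_3 -> Prop := gen [:: G1mx; G2mx; FUMmx].

Definition set_eq (P Q : 'M[algC]_3 -> Prop) := forall x, P x <-> Q x.
Definition strict_sub (P Q : 'M[algC]_3 -> Prop) :=
  (forall x, P x -> Q x) /\ exists x, Q x /\ ~ P x.

Definition grp_iso (P Q : 'M[algC]_3 -> Prop) :=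
  exists f : 'M[algC]_3 -> 'M[algC]_3,
    [/\ forall x, P x -> Q (f x),
        forall x y, P x -> P y -> f x = f y -> x = y,
        forall y, Q y -> exists2 x, P x & f x = y
      & forall x y, P x -> P y -> f (x *m y) = f x *m f y].

From Pilot Require Import Defs.
From HB Require Import structures.
From mathcomp Require Import all_boot all_order all_algebra all_field.
From mathcomp Require Import ring lra.
Set Implicit Arguments. Unset Strict Implicit. Unset Printing Implicit Defensive.
Import Order.TTheory GRing.Theory Num.Theory.
Local Open Scope ring_scope.

(* Write zeta = epi 9 = e^{i pi/9}.  The only analytic input is that
   eta 18 = zeta and omega = zeta^6; both follow from the characterization of
   n.-root (-1) as the n-th root of -1 with nonnegative imaginary part and
   maximal real part, by computing with real and imaginary parts in algR (an
   intermediate value argument for cos(pi/9) separates zeta from e^{i pi/3}).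
   Consequently every generator involved is a monomial matrix whose nonzero
   entries are powers of zeta.  Such a matrix is encoded by a code (permutation,
   exponents); products of codes compute products of matrices, so membership of a
   monomial matrix in a generated group is certified by a word whose code is
   checked by computation.  This gives all set equalities, comparing every group
   with H = D(9,1,1;2,0,1).  The isomorphism with Fr(162 x 4) is conjugation by an
   explicit involution Q mapping three monomial elements of H onto the generators
   G1, G2, FUM.  Finally, D(9,1,1;2,1,1) is generated by codes whose exponents
   all have the same parity; this is stable under products, the inverses of the
   generators are positive words, so the whole group has this property, which
   the generator G(2,0,1) of H lacks. *)

(* Complex numbers in rectangular form x + i y with x, y real algebraic numbers,
   so that real inequalities can be handled by lra/nra in algR. *)
Definition cx (x y : algR) : algC := algRval x + 'i * algRval y.

Lemma cx_rect (z : algC) : exists x y, z = cx x y.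
Proof. by exists (in_algR (Creal_Re z)), (in_algR (Creal_Im z)); exact: Crect. Qed.

Lemma cx_Re x y : 'Re (cx x y) = algRval x.
Proof. by rewrite /cx Re_rect ?algRvalP. Qed.

Lemma cx_Im x y : 'Im (cx x y) = algRval y.
Proof. by rewrite /cx Im_rect ?algRvalP. Qed.

Lemma cx_inj x y u v : cx x y = cx u v -> x = u /\ y = v.
Proof.
move=> e; have := congr1 (@Re _) e; have := congr1 (@Im _) e.
by rewrite !cx_Re !cx_Im => /val_inj -> /val_inj ->.
Qed.

Lemma cxN1 : -1 = cx (-1) 0.
Proof. by rewrite /cx rmorphN1 rmorph0 mulr0 addr0. Qed.

Lemma cxM x y u v : cx x y * cx u v = cx (x * u - y * v) (x * v + u * y).
Proof. by rewrite /cx mulC_rect !rmorphB !rmorphD !rmorphM. Qed.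

Lemma cx_sqr x y : cx x y ^+ 2 = cx (x ^+ 2 - y ^+ 2) (2 * x * y).
Proof. by rewrite expr2 cxM; congr cx; ring. Qed.

Lemma cx_cube x y :
  cx x y ^+ 3 = cx (x ^+ 3 - 3 * x * y ^+ 2) (3 * x ^+ 2 * y - y ^+ 3).
Proof. by rewrite exprSr cx_sqr cxM; congr cx; ring. Qed.

Lemma root_neg1_unit n x y : (0 < n)%N -> cx x y ^+ n = -1 -> x ^+ 2 + y ^+ 2 = 1.
Proof.
move=> n_gt0 /(congr1 Num.norm); rewrite normrX normrN1 => /eqP.
rewrite pexpr_eq1 // => /eqP n1; apply: val_inj.
by rewrite rmorphD !rmorphXn rmorph1 -(expr1n _ 2) -n1 /cx normC2_rect ?algRvalP.
Qed.

Lemma epi_rect n : (1 < n)%N -> exists x y, [/\ epi n = cx x y, 0 <= y,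
  x ^+ 2 + y ^+ 2 = 1 & forall X Y, 0 <= Y -> cx X Y ^+ n = -1 -> X <= x].
Proof.
move=> n_gt1; have n_gt0 : (0 < n)%N by apply: ltnW.
have [x [y exy]] := cx_rect (epi n); exists x, y; split => //.
- by have : 0 <= 'Im (epi n) := Im_rootC_ge0 _ n_gt1; rewrite exy cx_Im.
- by apply: (root_neg1_unit n_gt0); rewrite -exy /epi rootCK.
- move=> X Y Y_ge0 root_XY.
  have : 0 <= 'Im (cx X Y) -> 'Re (cx X Y) <= 'Re (epi n).
    exact: rootC_Re_max.
  by rewrite exy !cx_Re cx_Im => /(_ Y_ge0).
Qed.

Lemma epi_unique n x y p q : (1 < n)%N -> epi n = cx p q ->
  cx x y ^+ n = -1 -> 0 <= y -> p <= x -> cx x y = epi n.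
Proof.
move=> n_gt1 epq root_xy y_ge0 px.
have [p' [q' [epq' q'_ge0 unit' max']]] := epi_rect n_gt1.
have [pp' _] := cx_inj (etrans (esym epq') epq).
have xp : x = p' by apply/eqP; rewrite eq_le (max' _ _ y_ge0 root_xy) pp' px.
have unit := root_neg1_unit (ltnW n_gt1) root_xy.
have yq : y = q' by nra.
by rewrite epq' xp yq.
Qed.

Lemma cube_root_neg1 x y : cx x y ^+ 3 = -1 -> x = -1 \/ x = 1 / 2.
Proof.
move=> root3; have unit := root_neg1_unit (isT : (0 < 3)%N) root3.
move: root3; rewrite cx_cube cxN1 => /cx_inj [re _].
have : (x + 1) * (2 * x - 1) ^+ 2 = 0.
  have -> : (x + 1) * (2 * x - 1) ^+ 2 =
    (x ^+ 3 - 3 * x * y ^+ 2 + 1) + 3 * x * (x ^+ 2 + y ^+ 2 - 1) by ring.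
  by rewrite re unit !subrr mulr0 addr0 addNr.
by move/eqP; rewrite mulf_eq0 expf_eq0 /= => /orP [] /eqP h; [left|right]; lra.
Qed.

(* A 9-th root of -1 with real part at least 9/10: X = cos(pi/9) is the root of
   8 X^3 - 6 X - 1 in [9/10, 1], and (X + i Y)^3 = 1/2 + i sqrt(3)/2. *)
Lemma cos_pi9 : exists X Y, [/\ 9 / 10 <= X, 0 <= Y & cx X Y ^+ 9 = -1].
Proof.
pose p : {poly algR} := 8%:P * 'X^3 - 6%:P * 'X - 1%:P.
have pE t : p.[t] = 8 * t ^+ 3 - 6 * t - 1.
  by rewrite /p !(hornerD, hornerN, hornerM, hornerC, hornerXn, hornerX).
have le_ab : (9 / 10 : algR) <= 1 by lra.
have sign_change : p.[9 / 10] <= 0 <= p.[1] by rewrite !pE; apply/andP; split; lra.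
have [X /andP [X_ge X_le] /rootP] := poly_ivt le_ab sign_change.
rewrite pE => rootX.
pose Y := Num.sqrt (1 - X ^+ 2).
have YY : Y ^+ 2 = 1 - X ^+ 2 by rewrite sqr_sqrtr //; nra.
exists X, Y; split => //; first exact: sqrtr_ge0.
rewrite (_ : 9 = 3 * 3)%N // exprM cx_cube.
set u := _ - _; set v := _ - _.
have u_half : u = 1 / 2 by rewrite /u YY; lra.
have v2 : v ^+ 2 = 3 / 4.
  have : u ^+ 2 + v ^+ 2 = (X ^+ 2 + Y ^+ 2) ^+ 3 by rewrite /u /v; ring.
  by rewrite YY u_half; lra.
rewrite cx_cube cxN1; congr cx; rewrite u_half.
- have -> : (1 / 2) ^+ 3 - 3 * (1 / 2) * v ^+ 2 = 1 / 8 - 3 / 2 * v ^+ 2 by field.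
  rewrite v2; lra.
- have -> : 3 * (1 / 2) ^+ 2 * v - v ^+ 3 = v * (3 / 4 - v ^+ 2) by field.
  by rewrite v2 subrr mulr0.
Qed.

Lemma epi9_rect : exists x y,
  [/\ epi 9 = cx x y, 9 / 10 <= x, 0 <= y & x ^+ 2 + y ^+ 2 = 1].
Proof.
have [x [y [exy y_ge0 unit max]]] := epi_rect (isT : (1 < 9)%N).
have [X [Y [X_ge Y_ge0 rootXY]]] := cos_pi9.
by exists x, y; split => //; apply: le_trans X_ge (max _ _ Y_ge0 rootXY).
Qed.

(* e^{i pi/3} = (e^{i pi/9})^3: the cube of epi 9 is a cube root of -1 in the
   upper half plane with real part 1/2, the largest possible. *)
Lemma epi3_cube : epi 3 = epi 9 ^+ 3.
Proof.
have [x [y [exy x_ge y_ge0 unit]]] := epi9_rect.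
have [p [q [epq _ _ _]]] := epi_rect (isT : (1 < 3)%N).
have root3 : (epi 9 ^+ 3) ^+ 3 = -1 by rewrite -exprM /epi rootCK.
have y2 : y ^+ 2 = 1 - x ^+ 2 by lra.
move: root3; rewrite exy cx_cube; set u := _ - _; set v := _ - _ => root3.
have u_gt0 : 0 < u.
  have -> : u = x * (4 * x ^+ 2 - 3) by rewrite /u y2; ring.
  by apply: mulr_gt0; nra.
have u_half : u = 1 / 2 by case: (cube_root_neg1 root3) => // u_eq; lra.
have p_le : p <= 1 / 2.
  have : cx p q ^+ 3 = -1 by rewrite -epq /epi rootCK.
  by case/cube_root_neg1 => ->; lra.
symmetry; apply: epi_unique epq root3 _ _ => //; last by rewrite u_half.
have -> : v = y * (3 * x ^+ 2 - y ^+ 2) by rewrite /v; ring.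
by rewrite y2; apply: mulr_ge0 => //; nra.
Qed.

(* Half-angle formula e^{i pi/2n}^2 = e^{i pi/n}: the principal square root w of
   epi n is a 2n-th root of -1 in the upper half plane with nonnegative real
   part, so epi (2n) has real part at least Re w, and its square is an n-th root
   of -1 in the upper half plane with real part at least Re (epi n). *)
Lemma epi_double n : (1 < n)%N -> epi (2 * n) ^+ 2 = epi n.
Proof.
move=> n_gt1; have n2_gt1 : (1 < 2 * n)%N := leq_trans n_gt1 (leq_pmull n (isT : (0 < 2)%N)).
have [p [q [epq q_ge0 _ _]]] := epi_rect n_gt1.
have [x [y [exy y_ge0 unit max]]] := epi_rect n2_gt1.
pose w := sqrtC (epi n).
have [U [V ew]] := cx_rect w.
have w2 : cx U V ^+ 2 = epi n by rewrite -ew sqrtCK.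
have V_ge0 : 0 <= V.
  by have : 0 <= 'Im w := Im_rootC_ge0 _ (isT : (1 < 2)%N); rewrite ew cx_Im.
have w_root : cx U V ^+ (2 * n) = -1 by rewrite exprM w2 /epi rootCK // ltnW.
have unitUV := root_neg1_unit (ltnW n2_gt1) w_root.
have [UV q_eq] : U ^+ 2 - V ^+ 2 = p /\ 2 * U * V = q.
  by apply: cx_inj; rewrite -cx_sqr w2.
have U_ge0 : 0 <= U.
  have [V0|V_neq0] := eqVneq V 0; last first.
    have V_gt0 : 0 < V by rewrite lt_def V_neq0.
    nra.
  have root_negU : cx (- U) V ^+ 2 = epi n by rewrite -w2 !cx_sqr V0; congr cx; ring.
  have : 0 <= 'Im (cx (- U) V) -> 'Re (cx (- U) V) <= 'Re w.
    exact: rootC_Re_max.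
  rewrite cx_Im ew !cx_Re => /(_ V_ge0) negU_le.
  have : - U <= U := negU_le.
  lra.
have U_le_x := max _ _ V_ge0 w_root.
have root_b2 : cx (x ^+ 2 - y ^+ 2) (2 * x * y) ^+ n = -1.
  by rewrite -cx_sqr -exy -exprM /epi rootCK // ltnW.
rewrite exy cx_sqr; apply: epi_unique epq root_b2 _ _ => //; nra.
Qed.

Notation zeta := (epi 9).

Lemma zeta9 : zeta ^+ 9 = -1.
Proof. by rewrite /epi rootCK. Qed.

Lemma zeta18 : zeta ^+ 18 = 1.
Proof. by rewrite (_ : 18 = 9 * 2)%N // exprM zeta9 sqrrN expr1n. Qed.

Lemma eta9E : Defs.eta 9 = zeta ^+ 2.
Proof. by []. Qed.

Lemma eta18E : Defs.eta 18 = zeta.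
Proof. by rewrite /Defs.eta -(epi_double (isT : (1 < 9)%N)). Qed.

Lemma eta2E : Defs.eta 2 = -1.
Proof. by rewrite /Defs.eta /epi rootCK. Qed.

Lemma omegaE : omega = zeta ^+ 6.
Proof. by rewrite /omega /Defs.eta epi3_cube -exprM. Qed.

Lemma inv_zeta_pow k : (k <= 18)%N -> (zeta ^+ k)^-1 = zeta ^+ (18 - k).
Proof.
move=> k_le; have zk_neq0 : zeta ^+ k != 0.
  by rewrite expf_neq0 // rootC_eq0 // oppr_eq0 oner_eq0.
by apply: (mulfI zk_neq0); rewrite divff // -exprD subnKC // zeta18.
Qed.

Lemma mx3_eq (a1 a2 a3 a4 a5 a6 a7 a8 a9 b1 b2 b3 b4 b5 b6 b7 b8 b9 : algC) :
  a1 = b1 -> a2 = b2 -> a3 = b3 -> a4 = b4 -> a5 = b5 -> a6 = b6 ->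
  a7 = b7 -> a8 = b8 -> a9 = b9 ->
  mx3 a1 a2 a3 a4 a5 a6 a7 a8 a9 = mx3 b1 b2 b3 b4 b5 b6 b7 b8 b9.
Proof. by move=> -> -> -> -> -> -> -> -> ->. Qed.

Lemma mx3_mul (a1 a2 a3 a4 a5 a6 a7 a8 a9 b1 b2 b3 b4 b5 b6 b7 b8 b9 : algC) :
  mx3 a1 a2 a3 a4 a5 a6 a7 a8 a9 *m mx3 b1 b2 b3 b4 b5 b6 b7 b8 b9 =
  mx3 (a1*b1 + a2*b4 + a3*b7) (a1*b2 + a2*b5 + a3*b8) (a1*b3 + a2*b6 + a3*b9)
      (a4*b1 + a5*b4 + a6*b7) (a4*b2 + a5*b5 + a6*b8) (a4*b3 + a5*b6 + a6*b9)
      (a7*b1 + a8*b4 + a9*b7) (a7*b2 + a8*b5 + a9*b8) (a7*b3 + a8*b6 + a9*b9).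
Proof.
apply/matrixP => -[[|[|[|i]]] hi] -[[|[|[|j]]] hj] //;
  by rewrite !mxE !big_ord_recl big_ord0 !mxE /= addr0 addrA.
Qed.

Lemma scale_mx3 (c a1 a2 a3 a4 a5 a6 a7 a8 a9 : algC) :
  c *: mx3 a1 a2 a3 a4 a5 a6 a7 a8 a9 =
  mx3 (c*a1) (c*a2) (c*a3) (c*a4) (c*a5) (c*a6) (c*a7) (c*a8) (c*a9).
Proof. by apply/matrixP => -[[|[|[|i]]] hi] -[[|[|[|j]]] hj] //; rewrite !mxE. Qed.

(* Monomial matrices.  A code c = (s, e) describes the matrix mono x c whose row i
   has the single nonzero entry x ^+ e_i, in column s_i. *)
Definition mcode := (seq nat * seq nat)%type.

Definition mentry (x : algC) (c : mcode) (i j : nat) : algC :=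
  if nth 0 c.1 i == j then x ^+ nth 0 c.2 i else 0.

Definition mono (x : algC) (c : mcode) : 'M[algC]_3 := \matrix_(i, j) mentry x c i j.

Definition mcode1 : mcode := ([:: 0; 1; 2], [:: 0; 0; 0])%N.

Definition mcode_mul (c d : mcode) : mcode :=
  ([seq nth 0 d.1 (nth 0 c.1 i) | i <- iota 0 3],
   [seq nth 0 c.2 i + nth 0 d.2 (nth 0 c.1 i) | i <- iota 0 3])%N.

Definition mcode_ok (c : mcode) : bool := all (fun i => nth 0 c.1 i < 3)%N (iota 0 3).

Definition mcode_eqmod (m : nat) (c d : mcode) : bool :=
  all (fun i => (nth 0 c.1 i == nth 0 d.1 i) && (nth 0 c.2 i == nth 0 d.2 i %[mod m]))%N
      (iota 0 3).

Lemma mono_mx3 x c : mono x c =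
  mx3 (mentry x c 0 0) (mentry x c 0 1) (mentry x c 0 2)
      (mentry x c 1 0) (mentry x c 1 1) (mentry x c 1 2)
      (mentry x c 2 0) (mentry x c 2 1) (mentry x c 2 2).
Proof. by apply/matrixP => -[[|[|[|i]]] hi] -[[|[|[|j]]] hj] //; rewrite !mxE. Qed.

Lemma mono1 x : mono x mcode1 = 1%:M.
Proof.
by apply/matrixP => -[[|[|[|i]]] hi] -[[|[|[|j]]] hj] //; rewrite !mxE /mentry /=.
Qed.

Lemma mem_iota_ord (i : 'I_3) : (i : nat) \in iota 0 3.
Proof. by rewrite mem_iota /=. Qed.

Lemma mcode_okP c : mcode_ok c -> forall i : 'I_3, (nth 0 c.1 i < 3)%N.
Proof. by move=> /allP ok_c i; apply: ok_c (mem_iota_ord i). Qed.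

Lemma mcode_mul_nth c d (i : 'I_3) :
  nth 0 (mcode_mul c d).1 i = nth 0 d.1 (nth 0 c.1 i) /\
  nth 0 (mcode_mul c d).2 i = (nth 0 c.2 i + nth 0 d.2 (nth 0 c.1 i))%N.
Proof. by case: i => -[|[|[|]]]. Qed.

Lemma mono_mul x c d : mcode_ok c -> mono x c *m mono x d = mono x (mcode_mul c d).
Proof.
move=> ok_c; apply/matrixP => i j; rewrite !mxE.
have [perm_cd exp_cd] := mcode_mul_nth c d i.
pose k := Ordinal (mcode_okP ok_c i).
rewrite (bigD1 k) //= big1 ?addr0 => [|l /negbTE l_neq_k]; rewrite !mxE /mentry.
  by rewrite eqxx perm_cd exp_cd exprD; case: eqP; rewrite ?mulr0.
by rewrite (_ : (nth 0 c.1 i == l) = false) ?mul0r // eq_sym; exact: l_neq_k.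
Qed.

Lemma mcode_ok_mul c d : mcode_ok c -> mcode_ok d -> mcode_ok (mcode_mul c d).
Proof.
move=> ok_c ok_d; apply/allP => i; rewrite mem_iota /= => i_lt3.
have [-> _] := mcode_mul_nth c d (Ordinal i_lt3).
exact: (mcode_okP ok_d (Ordinal (mcode_okP ok_c (Ordinal i_lt3)))).
Qed.

Lemma mono_eqmod x m c d : x ^+ m = 1 -> mcode_eqmod m c d -> mono x c = mono x d.
Proof.
move=> xm /allP eq_cd; apply/matrixP => i j; rewrite !mxE /mentry.
have /andP [/eqP -> /eqP exp_eq] := eq_cd i (mem_iota_ord i).
have x_mod k : x ^+ k = x ^+ (k %% m).
  by rewrite {1}(divn_eq k m) exprD mulnC exprM xm expr1n mul1r.
by rewrite x_mod exp_eq -x_mod.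
Qed.

Fixpoint word_code (cs : seq mcode) (w : seq nat) : mcode :=
  if w is i :: w' then mcode_mul (nth mcode1 cs i) (word_code cs w') else mcode1.

Lemma mono_word (P : 'M[algC]_3 -> Prop) x cs w :
  P 1%:M -> (forall A B, P A -> P B -> P (A *m B)) ->
  (forall c, c \in cs -> P (mono x c)) -> all mcode_ok cs ->
  all (fun i => i < size cs)%N w -> P (mono x (word_code cs w)).
Proof.
move=> P1 PM Pcs ok_cs; elim: w => [|i w IHw] /=; first by rewrite mono1.
case/andP=> i_lt w_ok; rewrite -mono_mul; last exact: (allP ok_cs) (mem_nth _ i_lt).
by apply: PM (IHw w_ok); apply: Pcs; rewrite mem_nth.
Qed.

Definition word_witness (cs : seq mcode) (w : seq nat) (t : mcode) : bool :=
  [&& all mcode_ok cs, all (fun i => i < size cs)%N w & mcode_eqmod 18 t (word_code cs w)].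

Lemma gen_of_word cs w t : word_witness cs w t -> gen (map (mono zeta) cs) (mono zeta t).
Proof.
case/and3P=> ok_cs w_ok eq_t; rewrite (mono_eqmod zeta18 eq_t).
apply: mono_word ok_cs w_ok => [|A B|c c_in]; [exact: gen_one | exact: gen_mul |].
by apply: gen_in; apply: map_f.
Qed.

Lemma gen_incl S T : (forall s, s \in S -> gen T s) -> forall x, gen S x -> gen T x.
Proof.
move=> ST x; elim=> {x} [x /ST //|||x _ /gen_inv //].
- exact: gen_one.
- by move=> x y _ Tx _ Ty; apply: gen_mul.
Qed.

Lemma set_eq_sym P Q : set_eq P Q -> set_eq Q P.
Proof. by move=> PQ x; split => /PQ. Qed.

Lemma set_eq_trans P Q R : set_eq P Q -> set_eq Q R -> set_eq P R.
Proof. by move=> PQ QR x; rewrite PQ QR. Qed.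

Definition gen_witness (cs ds : seq mcode) (ws : seq (seq nat)) : bool :=
  all2 (fun c w => word_witness ds w c) cs ws.

Lemma gen_witnessP cs ds ws : gen_witness cs ds ws ->
  forall s, s \in map (mono zeta) cs -> gen (map (mono zeta) ds) s.
Proof.
elim: cs ws => [|c cs IHcs] [|w ws] //= /andP [wit_c wit_cs] s.
by rewrite inE => /orP [/eqP -> | /(IHcs _ wit_cs)]; [exact: gen_of_word wit_c |].
Qed.

Lemma gen_eq_of_words cs ds ws vs : gen_witness cs ds ws -> gen_witness ds cs vs ->
  set_eq (gen (map (mono zeta) cs)) (gen (map (mono zeta) ds)).
Proof.
move=> wit_cs wit_ds x; split; apply: gen_incl.
- exact: gen_witnessP wit_cs.
- exact: gen_witnessP wit_ds.
Qed.

Definition cF9 : mcode := ([:: 0; 1; 2], [:: 2; 2; 14])%N.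
Definition cF18 : mcode := ([:: 0; 1; 2], [:: 1; 1; 16])%N.
Definition cE : mcode := ([:: 1; 2; 0], [:: 0; 0; 0])%N.
Definition cG01 : mcode := ([:: 0; 2; 1], [:: 0; 9; 0])%N.
Definition cG00 : mcode := ([:: 0; 2; 1], [:: 0; 0; 9])%N.
Definition cG11 : mcode := ([:: 0; 2; 1], [:: 9; 9; 9])%N.

Lemma Fmx_mono n k c : Defs.eta n = zeta ^+ k -> (2 * k <= 18)%N ->
  c = ([:: 0; 1; 2], [:: k; k; 18 - 2 * k])%N -> Fmx n 1 1 = mono zeta c.
Proof.
move=> eta_n k_le ->; rewrite /Fmx mono_mx3 /mentry /=; apply: mx3_eq => //.
by rewrite (_ : -1 - 1 = - 2%:Z) // -exprnN eta_n -exprM mulnC inv_zeta_pow.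
Qed.

Lemma F9E : Fmx 9 1 1 = mono zeta cF9.
Proof. exact: Fmx_mono eta9E _ _. Qed.

Lemma F18E : Fmx 18 1 1 = mono zeta cF18.
Proof. by apply: Fmx_mono (_ : _ = zeta ^+ 1) _ _; rewrite ?expr1 ?eta18E. Qed.

Lemma EmxE : Emx = mono zeta cE.
Proof. by rewrite /Emx mono_mx3 /mentry /= expr0. Qed.

Lemma Gt01E : Gtmx 2 0 1 = mono zeta cG01.
Proof.
rewrite /Gtmx mono_mx3 /mentry /= eta2E zeta9 expr0 expr0z; apply: mx3_eq => //.
by rewrite (_ : - 0 - 1 = -1) // exprN1 invrN1 opprK.
Qed.

Lemma Gt00E : Gtmx 2 0 0 = mono zeta cG00.
Proof.
by rewrite /Gtmx mono_mx3 /mentry /= eta2E zeta9 expr0 (_ : - 0 - 0 = 0) // !expr0z.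
Qed.

Lemma Gt11E : Gtmx 2 1 1 = mono zeta cG11.
Proof.
rewrite /Gtmx mono_mx3 /mentry /= eta2E zeta9 expr1z; apply: mx3_eq => //.
by rewrite (_ : - 1 - 1 = - 2%:Z) // -exprnN sqrrN expr1n invr1.
Qed.

Lemma DgrpE n d r s cF cG : Fmx n 1 1 = mono zeta cF -> Gtmx d r s = mono zeta cG ->
  Dgrp n 1 1 d r s = gen (map (mono zeta) [:: cF; cE; cG]).
Proof. by move=> eF eG; rewrite /Dgrp eF EmxE eG. Qed.

Definition Hgrp := gen (map (mono zeta) [:: cF9; cE; cG01]).

Lemma D901E : Dgrp 9 1 1 2 0 1 = Hgrp.
Proof. exact: DgrpE F9E Gt01E. Qed.

Lemma D900E : set_eq (Dgrp 9 1 1 2 0 0) Hgrp.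
Proof.
rewrite (DgrpE F9E Gt00E).
by apply: (gen_eq_of_words (ws := [:: [:: 0]; [:: 1]; [:: 2; 2; 2]])
                           (vs := [:: [:: 0]; [:: 1]; [:: 1; 2; 1]])%N).
Qed.

Lemma D1811E : set_eq (Dgrp 18 1 1 2 1 1) Hgrp.
Proof.
rewrite (DgrpE F18E Gt11E).
by apply: (gen_eq_of_words
  (ws := [:: [:: 0; 0; 0; 0; 0; 2; 1; 2; 1]; [:: 1]; [:: 1; 2; 1; 2; 2]])
  (vs := [:: [:: 0; 0]; [:: 1]; [:: 0; 0; 0; 0; 0; 0; 2; 0; 0; 0]])%N).
Qed.

Lemma D1800E : set_eq (Dgrp 18 1 1 2 0 0) Hgrp.
Proof.
rewrite (DgrpE F18E Gt00E).
by apply: (gen_eq_of_words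
  (ws := [:: [:: 0; 0; 0; 0; 0; 2; 1; 2; 1]; [:: 1]; [:: 2; 2; 2]])
  (vs := [:: [:: 0; 0]; [:: 1]; [:: 1; 2; 1]])%N).
Qed.

Lemma D1801E : set_eq (Dgrp 18 1 1 2 0 1) Hgrp.
Proof.
rewrite (DgrpE F18E Gt01E).
by apply: (gen_eq_of_words
  (ws := [:: [:: 0; 0; 0; 0; 0; 2; 1; 2; 1]; [:: 1]; [:: 2]])
  (vs := [:: [:: 0; 0]; [:: 1]; [:: 2]])%N).
Qed.

(* Monomial elements of H conjugate to the generators G1, G2, FUM of Fr(162 x 4),
   and the proof that they generate H. *)
Definition cG1 : mcode := ([:: 2; 1; 0], [:: 7; 13; 7])%N.
Definition cG2 : mcode := ([:: 1; 0; 2], [:: 7; 7; 13])%N.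
Definition cFUM : mcode := ([:: 0; 1; 2], [:: 15; 15; 6])%N.

Lemma Fr_codes : set_eq Hgrp (gen (map (mono zeta) [:: cG1; cG2; cFUM])).
Proof.
by apply: (gen_eq_of_words
  (ws := [:: [:: 1; 1; 2; 2; 2; 2]; [:: 1; 0; 0; 1; 1; 0; 2; 2]; [:: 0; 1; 0; 2; 2; 2]])
  (vs := [:: [:: 0; 2; 2; 1; 2; 0]; [:: 2; 0; 1; 2; 0; 2]; [:: 0; 0; 0; 2; 1; 2; 1]])%N).
Qed.

Lemma sqrt2_sqr : sqrtC 2 ^+ 2 = 2 :> algC.
Proof. exact: sqrtCK. Qed.

Lemma sqrt2_neq0 : sqrtC 2 != 0 :> algC.
Proof.
apply/eqP => s0; have := sqrt2_sqr; rewrite s0 expr0n => /eqP.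
by rewrite eq_sym pnatr_eq0.
Qed.

Definition Qmx : 'M[algC]_3 :=
  mx3 (sqrtC 2)^-1 0 (sqrtC 2)^-1  0 1 0  (sqrtC 2)^-1 0 (- (sqrtC 2)^-1).

Lemma Qmx_invol : Qmx *m Qmx = 1%:M.
Proof.
rewrite /Qmx mx3_mul -[1%:M](mono1 zeta) mono_mx3 /mentry /=.
by apply: mx3_eq; field: sqrt2_sqr; rewrite ?sqrt2_neq0.
Qed.

Lemma conjQ_G1 : Qmx *m mono zeta cG1 *m Qmx = G1mx.
Proof.
rewrite /Qmx /G1mx mono_mx3 /mentry /= !mx3_mul.
by apply: mx3_eq; field: sqrt2_sqr zeta9; rewrite ?sqrt2_neq0.
Qed.

Lemma conjQ_G2 : Qmx *m mono zeta cG2 *m Qmx = G2mx.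
Proof.
rewrite /Qmx /G2mx mono_mx3 /mentry /= !mx3_mul.
by apply: mx3_eq; field: sqrt2_sqr zeta9; rewrite ?sqrt2_neq0 ?pnatr_eq0.
Qed.

Lemma conjQ_FUM : Qmx *m mono zeta cFUM *m Qmx = FUMmx.
Proof.
rewrite /Qmx /FUMmx /Jmx omegaE scale_mx3 mono_mx3 /mentry /= !mx3_mul.
by apply: mx3_eq; field: sqrt2_sqr zeta9; rewrite ?sqrt2_neq0.
Qed.

Lemma invmx_uniq (A B : 'M[algC]_3) : A *m B = 1%:M -> invmx A = B.
Proof.
move=> AB; have [uA _] := mulmx1_unit AB.
by rewrite -[invmx A]mulmx1 -AB mulmxA mulVmx ?mul1mx.
Qed.

Section Conjugation.

Variable Q : 'M[algC]_3.
Hypothesis QQ : Q *m Q = 1%:M.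

Let conjQ (x : 'M[algC]_3) := Q *m x *m Q.

Lemma conjQK : involutive conjQ.
Proof. by move=> x; rewrite /conjQ !mulmxA QQ mul1mx -mulmxA QQ mulmx1. Qed.

Lemma conjQM x y : conjQ (x *m y) = conjQ x *m conjQ y.
Proof. by rewrite /conjQ !mulmxA -(mulmxA _ Q Q) QQ mulmx1. Qed.

Lemma conjQV x : invmx (conjQ x) = conjQ (invmx x).
Proof.
have [uQ _] := mulmx1_unit QQ.
have [ux|nux] := boolP (x \in unitmx).
  by apply: invmx_uniq; rewrite -conjQM mulmxV // /conjQ mulmx1 QQ.
by rewrite !invmx_out // inE !unitmx_mul uQ andbT.
Qed.

Lemma conj_gen S T : (forall s, s \in S -> gen T (conjQ s)) ->
  forall x, gen S x -> gen T (conjQ x).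
Proof.
move=> ST x; elim=> {x} [x /ST //| |x y _ Tx _ Ty|x _ Tx].
- by rewrite /conjQ mulmx1 QQ; apply: gen_one.
- by rewrite conjQM; apply: gen_mul.
- by rewrite -conjQV; apply: gen_inv.
Qed.

Lemma conj_iso S P : set_eq P (gen S) -> grp_iso P (gen (map conjQ S)).
Proof.
move=> PS; exists conjQ; split.
- move=> x /PS; apply: conj_gen => s s_in; apply: gen_in; exact: map_f.
- by move=> x y _ _ /(congr1 conjQ); rewrite !conjQK.
- move=> y y_in; exists (conjQ y); last exact: conjQK.
  apply/PS; apply: conj_gen y_in => _ /mapP [s s_in ->].
  by rewrite conjQK; apply: gen_in.
- by move=> x y _ _; apply: conjQM.
Qed.

End Conjugation.

Lemma Fr_conj :
  Fr162x4 = gen (map (fun x => Qmx *m x *m Qmx) (map (mono zeta) [:: cG1; cG2; cFUM])).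
Proof. by rewrite /= conjQ_G1 conjQ_G2 conjQ_FUM. Qed.

Lemma iso_Fr P : set_eq P Hgrp -> grp_iso P Fr162x4.
Proof.
move=> PH; rewrite Fr_conj; apply: (conj_iso Qmx_invol) => x.
by rewrite PH Fr_codes.
Qed.

Inductive mgen (S : seq 'M[algC]_3) : 'M[algC]_3 -> Prop :=
  | mgen_in x : x \in S -> mgen S x
  | mgen_one : mgen S 1%:M
  | mgen_mul x y : mgen S x -> mgen S y -> mgen S (x *m y).

Lemma gen_mgen S : (forall s, s \in S -> exists2 w, mgen S w & s *m w = 1%:M) ->
  forall x, gen S x -> [/\ mgen S x, mgen S (invmx x) & x \in unitmx].
Proof.
move=> invS x; elim=> {x} [s s_in| |x y _ [Sx Sx' ux] _ [Sy Sy' uy]|x _ [Sx Sx' ux]].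
- have [w Sw sw] := invS s s_in; have [us _] := mulmx1_unit sw.
  by rewrite (invmx_uniq sw); split => //; apply: mgen_in.
- by rewrite invmx1; split; [apply: mgen_one | apply: mgen_one | apply: unitmx1].
- have xy_inv : invmx (x *m y) = invmx y *m invmx x.
    by apply: invmx_uniq; rewrite mulmxA -(mulmxA x) mulmxV // mulmx1 mulmxV.
  by rewrite xy_inv unitmx_mul ux uy; split => //; apply: mgen_mul.
- by rewrite invmxK unitmx_inv.
Qed.

Lemma mgen_inverse cs c w : all mcode_ok cs -> all (fun i => i < size cs)%N w ->
  mcode_ok c -> mcode_eqmod 18 (mcode_mul c (word_code cs w)) mcode1 ->
  exists2 W, mgen (map (mono zeta) cs) W & mono zeta c *m W = 1%:M.
Proof.
move=> ok_cs w_ok ok_c inv_w; exists (mono zeta (word_code cs w)).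
  apply: mono_word ok_cs w_ok => [|A B|c' c'_in]; [exact: mgen_one | exact: mgen_mul |].
  by apply: mgen_in; apply: map_f.
by rewrite mono_mul // (mono_eqmod zeta18 inv_w) mono1.
Qed.

Definition even_parity (c : mcode) : bool :=
  all (fun i => odd (nth 0 c.2 i) == odd (nth 0 c.2 0)) (iota 0 3).

Lemma even_parity_mul c d : mcode_ok c -> even_parity c -> even_parity d ->
  even_parity (mcode_mul c d).
Proof.
move=> ok_c /allP par_c /allP par_d.
have odd_mul k : (k < 3)%N ->
    odd (nth 0 (mcode_mul c d).2 k) = odd (nth 0 c.2 0) (+) odd (nth 0 d.2 0).
  move=> k_lt3; have [_ ->] := mcode_mul_nth c d (Ordinal k_lt3).
  rewrite oddD (eqP (par_c _ (mem_iota_ord (Ordinal k_lt3)))).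
  by rewrite (eqP (par_d _ (mem_iota_ord (Ordinal (mcode_okP ok_c (Ordinal k_lt3)))))).
by apply/allP => i; rewrite mem_iota /= => i_lt3; rewrite (odd_mul i) // (odd_mul 0).
Qed.

Lemma mgen_parity cs : all mcode_ok cs -> all even_parity cs ->
  forall X, mgen (map (mono zeta) cs) X ->
  exists c, [/\ X = mono zeta c, mcode_ok c & even_parity c].
Proof.
move=> /allP ok_cs /allP par_cs X.
elim=> {X} [X /mapP [c c_in ->]| |X Y _ [c [-> ok_c par_c]] _ [d [-> ok_d par_d]]].
- by exists c; split => //; [apply: ok_cs | apply: par_cs].
- by exists mcode1; rewrite mono1.
- exists (mcode_mul c d).
  by split; [exact: mono_mul | exact: mcode_ok_mul | exact: even_parity_mul].
Qed.

Lemma zeta_pow9 e : (zeta ^+ e) ^+ 9 = (-1) ^+ odd e.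
Proof. by rewrite -exprM mulnC exprM zeta9 signr_odd. Qed.

Lemma neg1_neq1 : (-1 : algC) != 1.
Proof. by rewrite eq_sym -addr_eq0 -mulr2n pnatr_eq0. Qed.

(* G~(2,0,1) has entries 1 and -1 = zeta^9, of different parities. *)
Lemma G01_odd c : mono zeta c = mono zeta cG01 -> ~~ even_parity c.
Proof.
move=> e_c; apply/negP => /allP par_c.
have entry (i j : 'I_3) : mentry zeta c i j = mentry zeta cG01 i j.
  by have := congr1 (fun A : 'M_3 => A i j) e_c; rewrite !mxE.
have := entry (@Ordinal 3 1 isT) (@Ordinal 3 2 isT).
have := entry (@Ordinal 3 0 isT) (@Ordinal 3 0 isT).
rewrite /mentry /= expr0 zeta9.
case: ifP => _ => [e0|/esym/eqP]; last by rewrite oner_eq0.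
case: ifP => _ => [e1|/esym/eqP]; last by rewrite oppr_eq0 oner_eq0.
move: (congr1 (fun z => z ^+ 9) e0) (congr1 (fun z => z ^+ 9) e1) => /=.
rewrite !zeta_pow9 (eqP (par_c 1%N isT)) => ->.
by rewrite expr1n -signr_odd /= expr1 => /eqP; rewrite eq_sym (negbTE neg1_neq1).
Qed.

Lemma D911_strict : strict_sub (Dgrp 9 1 1 2 1 1) Hgrp.
Proof.
rewrite (DgrpE F9E Gt11E); split.
  apply: gen_incl; apply: (@gen_witnessP _ _ [:: [:: 0]; [:: 1]; [:: 1; 2; 1; 2; 2]]%N).
  by [].
exists (mono zeta cG01); split; first by apply: gen_in; rewrite !inE eqxx !orbT.
have inverses s : s \in map (mono zeta) [:: cF9; cE; cG11] ->
    exists2 w, mgen (map (mono zeta) [:: cF9; cE; cG11]) w & s *m w = 1%:M.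
  rewrite !inE => /or3P [] /eqP ->.
  - by apply: (@mgen_inverse _ _ [:: 1; 0; 1; 0; 1]%N).
  - by apply: (@mgen_inverse _ _ [:: 1; 1]%N).
  - by apply: (@mgen_inverse _ _ [:: 2]%N).
case/(gen_mgen inverses) => /mgen_parity [] // c [e_c _ par_c] _ _.
by move/negP: (G01_odd (esym e_c)).
Qed.

Theorem theorem10 :
  strict_sub (Dgrp 9 1 1 2 1 1) (Dgrp 9 1 1 2 0 1) /\
  set_eq (Dgrp 9 1 1 2 0 1) (Dgrp 9 1 1 2 0 0) /\
  set_eq (Dgrp 9 1 1 2 0 0) (Dgrp 18 1 1 2 1 1) /\
  set_eq (Dgrp 18 1 1 2 1 1) (Dgrp 18 1 1 2 0 0) /\
  set_eq (Dgrp 18 1 1 2 0 0) (Dgrp 18 1 1 2 0 1) /\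
  grp_iso (Dgrp 9 1 1 2 0 1) Fr162x4 /\
  grp_iso (Dgrp 9 1 1 2 0 0) Fr162x4 /\
  grp_iso (Dgrp 18 1 1 2 1 1) Fr162x4 /\
  grp_iso (Dgrp 18 1 1 2 0 0) Fr162x4 /\
  grp_iso (Dgrp 18 1 1 2 0 1) Fr162x4.
Proof.
have link P Q : set_eq P Hgrp -> set_eq Q Hgrp -> set_eq P Q.
  by move=> PH QH; apply: set_eq_trans PH (set_eq_sym QH).
rewrite D901E.
split; first exact: D911_strict.
split; first exact: set_eq_sym D900E.
split; first exact: link D900E D1811E.
split; first exact: link D1811E D1800E.
split; first exact: link D1800E D1801E.
split; first exact: iso_Fr (fun x => iff_refl _).
split; first exact: iso_Fr D900E.
split; first exact: iso_Fr D1811E.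
split; first exact: iso_Fr D1800E.
exact: iso_Fr D1801E.
Qed.
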